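(* Let $p$ be a prime number, and let $N,n\ge 1$ and $\nu\ge 0$ be integers with $n\not\equiv 0\pmod{p-1}$. If $$\mathrm{ord}_p(N-1)\ \ge\ \nu+1+\mathrm{ord}_p\Big(\prod_{k=0}^{n}(1+k)!\Big)+\mathrm{ord}_p(n),$$ then $$\frac{B_{N,n}}{n}\equiv\frac{B_n}{n}\pmod{p^{\nu+1}}.$$
   Context: For a positive integer $N$, the hypergeometric Bernoulli numbers $B_{N,n}$ are defined by $\frac{x^N/N!}{e^x-\sum_{n=0}^{N-1}x^n/n!}=\sum_{n\ge0} B_{N,n}\frac{x^n}{n!}$, and the classical Bernoulli numbers $B_n$ by $\frac{x}{e^x-1}=\sum_{n\ge0}B_n\frac{x^n}{n!}$. $\mathrm{ord}_p$ denotes the $p$-adic valuation on $\mathbb{Q}$ (with $\mathrm{ord}_p(0)=\infty$); for rationals $a,b$, $a\equiv b\pmod{p^s}$ means $\mathrm{ord}_p(a-b)\ge s$. *)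

From mathcomp Require Import all_boot all_order all_algebra.
Set Implicit Arguments. Unset Strict Implicit. Unset Printing Implicit Defensive.
Import Order.TTheory GRing.Theory Num.Theory.
Local Open Scope ring_scope.

(* Coefficients of the reciprocal of a formal power series A(x) = sum a_m x^m
   with a_0 <> 0: if 1/A(x) = sum c_n x^n then
   c_0 = 1/a_0 and c_n = -(1/a_0) * sum_{k<n} a_(n-k) c_k.
   recip_seq a n = [:: c_0; ...; c_n]. *)
Fixpoint recip_seq (a : nat -> rat) (n : nat) : seq rat :=
  match n with
  | 0%N => [:: (a 0%N)^-1]
  | n'.+1 =>
      let s := recip_seq a n' in
      rcons s (- (a 0%N)^-1 * \sum_(k < n'.+1) a (n'.+1 - k)%N * nth 0 s k)
  end.

Definition recip_coef (a : nat -> rat) (n : nat) : rat := nth 0 (recip_seq a n) n.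

(* Hypergeometric Bernoulli numbers:
   (x^N/N!) / (e^x - sum_{n<N} x^n/n!) = sum_n B_{N,n} x^n/n!.
   Since e^x - sum_{n<N} x^n/n! = x^N * sum_m x^m/(N+m)!, the left side is
   (1/N!) * 1/(sum_m x^m/(N+m)!). *)
Definition hbern (N n : nat) : rat :=
  n`!%:R * ((N`!%:R)^-1 * recip_coef (fun m => ((N + m)`!%:R)^-1) n).

(* Classical Bernoulli numbers: x/(e^x - 1) = 1/(sum_m x^m/(m+1)!)
   = sum_n B_n x^n/n!. *)
Definition bern (n : nat) : rat :=
  n`!%:R * recip_coef (fun m => ((m.+1)`!%:R)^-1) n.

(* p-adic valuation of a nonzero rational (value on 0 irrelevant, see below). *)
Definition ordq (p : nat) (r : rat) : int :=
  (logn p `|numq r|%N)%:Z - (logn p `|denq r|%N)%:Z.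

(* a = b (mod p^s) for rationals: ord_p(a - b) >= s, with ord_p(0) = +oo. *)
Definition congr_ppow (p s : nat) (a b : rat) : Prop :=
  a = b \/ (s%:Z <= ordq p (a - b)).

From mathcomp Require Import all_boot all_order all_algebra.
From mathcomp Require Import ring lra zify.
Set Implicit Arguments. Unset Strict Implicit. Unset Printing Implicit Defensive.
Import Order.TTheory GRing.Theory Num.Theory.
Local Open Scope ring_scope.

(* Write B_{N,n} = n! D_n and B_n = n! E_n, where D and E are the reciprocals
   of the series sum_m N!/(N+m)! x^m and sum_m x^m/(m+1)! (its case N = 1).
   Since (N+m)!/N! is congruent to (m+1)! modulo e = N - 1, the coefficients
   of the two series differ by e times a p-integral multiple of 1/(m+1)!^2 as
   soon as e is divisible by a high enough power of p.  Feeding this into the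
   triangular recurrence satisfied by D - E shows by induction on k <= n that
   (prod_{i<=k} (i+1)!) (k+1)! (D_k - E_k) / e is p-integral; at k = n the
   factor (n+1)! can be lowered to n! because n!/(n+1) is p-integral when
   p - 1 does not divide n.  The hypothesis on ord_p(N - 1) then leaves a
   factor p^(nu+1) in (B_{N,n} - B_n)/n = n! (D_n - E_n)/n. *)

Lemma natr_neq0 m : (0 < m)%N -> (m%:R : rat) != 0.
Proof. by rewrite pnatr_eq0 -lt0n. Qed.

Lemma dvdn_fact_fact m n : (m <= n)%N -> (m`! %| n`!)%N.
Proof.
elim: n => [|n IHn]; first by rewrite leqn0 => /eqP ->.
rewrite leq_eqVlt => /orP [/eqP -> //|lt_mn].
by rewrite factS dvdn_mull // IHn.
Qed.

Lemma dvdn_fact_pred q : (1 < q)%N -> ~~ prime q -> q != 4%N -> (q %| q.-1`!)%N.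
Proof.
move=> q_gt1 q_npr q_neq4.
have mul_dvd_fact a b : (0 < a < b)%N -> (a * b %| b`!)%N.
  case/andP=> a_gt0; case: b => // b lt_ab.
  by rewrite factS mulnC dvdn_pmul2l // dvdn_fact // a_gt0 -ltnS.
have [d_pr d_dvd] := (pdiv_prime q_gt1, pdiv_dvd q).
have [c def_q] := dvdnP d_dvd; set d := pdiv q in d_pr d_dvd def_q.
have d_gt1 : (1 < d)%N by apply: prime_gt1.
have c_gt1 : (1 < c)%N.
  case: c def_q => [|[|c]] def_q //; first by move: q_gt1; rewrite def_q.
  by move: q_npr; rewrite def_q mul1n d_pr.
rewrite def_q; case: (ltngtP c d) => [lt_cd|lt_dc|eq_cd].
- apply: (dvdn_trans (mul_dvd_fact c d _)); last apply: dvdn_fact_fact; nia.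
- rewrite mulnC; apply: (dvdn_trans (mul_dvd_fact d c _)); last apply: dvdn_fact_fact; nia.
- have d_gt2 : (2 < d)%N.
    by rewrite ltn_neqAle d_gt1 andbT; apply: contraNneq q_neq4 => d2; rewrite def_q eq_cd -d2.
  rewrite eq_cd; apply: dvdn_trans (dvdn_mulr 2 (dvdnn (d * d))) _.
  rewrite -mulnA (mulnC d 2).
  apply: (dvdn_trans (mul_dvd_fact d (2 * d) _)); last apply: dvdn_fact_fact; nia.
Qed.

Definition prod_fact n := (\prod_(k < n.+1) (1 + k)`!)%N.

Lemma prod_factS n : prod_fact n.+1 = (prod_fact n * n.+2`!)%N.
Proof. by rewrite /prod_fact big_ord_recr. Qed.

Lemma prod_fact_gt0 n : (0 < prod_fact n)%N.
Proof. by apply: prodn_gt0 => i; apply: fact_gt0. Qed.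

Lemma dvdn_fact_prod_fact m n : (m <= n)%N -> (m.+1`! %| prod_fact n)%N.
Proof.
elim: n => [|n IHn]; first by rewrite leqn0 => /eqP ->; rewrite /prod_fact big_ord1.
rewrite prod_factS leq_eqVlt => /orP [/eqP -> |lt_mn]; first exact: dvdn_mull.
by rewrite dvdn_mulr // IHn.
Qed.

Lemma dvdn_prod_fact j k : (j < k)%N -> ((k - j).+1`! * prod_fact j %| prod_fact k)%N.
Proof.
elim: k => // k IHk; rewrite ltnS leq_eqVlt => /orP [/eqP -> |lt_jk].
  by rewrite prod_factS mulnC dvdn_pmul2l ?prod_fact_gt0 // dvdn_fact_fact // subSnn.
rewrite prod_factS mulnC; apply: dvdn_mul; last by apply: dvdn_fact_fact; lia.
by apply: dvdn_trans (IHk lt_jk); apply: dvdn_mull.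
Qed.

Lemma dvdn_weight n j k : (j < k <= n)%N ->
  ((k - j).+1`! * prod_fact j * j.+1`! %| prod_fact k * (minn k.+1 n)`!)%N.
Proof.
case/andP=> lt_jk le_kn; apply: dvdn_mul; first exact: dvdn_prod_fact.
by apply: dvdn_fact_fact; rewrite leq_min ltnS ltnW //= (leq_trans lt_jk).
Qed.

Lemma fact_shift e m : exists K, ((e.+1 + m)`! = e.+1`! * ((m.+1)`! + e * K))%N.
Proof.
elim: m => [|m [K IHm]]; first by exists 0%N; rewrite addn0 muln0 addn0 muln1.
exists ((m.+1)`! + (e.+1 + m.+1) * K)%N.
rewrite addnS factS IHm [(m.+2)`!]factS; nia.
Qed.

Lemma size_recip_seq a k : size (recip_seq a k) = k.+1.
Proof. by elim: k => //= k IHk; rewrite size_rcons IHk. Qed.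

Lemma nth_recip_seq a k j : (j <= k)%N -> nth 0 (recip_seq a k) j = recip_coef a j.
Proof.
elim: k => [|k IHk]; first by rewrite leqn0 => /eqP ->.
rewrite leq_eqVlt => /orP [/eqP -> //|lt_jk].
by rewrite /= nth_rcons size_recip_seq lt_jk IHk.
Qed.

Lemma recip_coefS a k : recip_coef a k.+1 =
  - (a 0%N)^-1 * \sum_(j < k.+1) a (k.+1 - j)%N * recip_coef a j.
Proof.
rewrite /recip_coef /= nth_rcons size_recip_seq ltnn eqxx.
by congr (_ * _); apply: eq_bigr => j _; rewrite nth_recip_seq // -ltnS.
Qed.

Lemma recip_coefE a k : a 0%N = 1 ->
  recip_coef a k = (k == 0)%:R - \sum_(j < k) a (k - j)%N * recip_coef a j.
Proof.
move=> a0; case: k => [|k]; first by rewrite /recip_coef /= a0 invr1 big_ord0 subr0.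
by rewrite recip_coefS a0 invr1 mulN1r sub0r.
Qed.

Lemma recip_coefZ (c : rat) (a : nat -> rat) k : c != 0 ->
  recip_coef (fun m => c * a m) k = c^-1 * recip_coef a k.
Proof.
move=> c_neq0; elim/ltn_ind: k => [[|k]] IHk; first by rewrite /recip_coef /= invfM.
rewrite !recip_coefS.
have -> : \sum_(j < k.+1) c * a (k.+1 - j)%N * recip_coef (fun m => c * a m) j
        = \sum_(j < k.+1) a (k.+1 - j)%N * recip_coef a j.
  by apply: eq_bigr => j _; rewrite IHk //; field.
have [a0_eq0|a0_neq0] := eqVneq (a 0%N) 0.
  by rewrite a0_eq0 mulr0 invr0 !(oppr0, mul0r, mulr0).
by field; rewrite a0_neq0.
Qed.

Lemma recip_coefB a b k : a 0%N = 1 -> b 0%N = 1 ->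
  recip_coef a k - recip_coef b k =
  \sum_(j < k) (b (k - j)%N - a (k - j)%N) * recip_coef b j
  - \sum_(j < k) a (k - j)%N * (recip_coef a j - recip_coef b j).
Proof.
move=> a0 b0; rewrite [recip_coef a k]recip_coefE // [recip_coef b k]recip_coefE //.
under [X in _ = X - _]eq_bigr do rewrite mulrBl.
under [X in _ = _ - X]eq_bigr do rewrite mulrBr.
rewrite !sumrB; ring.
Qed.

(* The m-th coefficient of N! x^-N (e^x - sum_(n<N) x^n/n!). *)
Definition hg_series (N m : nat) : rat := N`!%:R / (N + m)`!%:R.

Lemma hg_series0 N : hg_series N 0 = 1.
Proof. by rewrite /hg_series addn0 divff // natr_neq0 // fact_gt0. Qed.

Lemma hbernE N n : hbern N n = n`!%:R * recip_coef (hg_series N) n.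
Proof. by rewrite /hbern /hg_series recip_coefZ // natr_neq0 // fact_gt0. Qed.

Lemma bernE n : bern n = hbern 1 n.
Proof. by rewrite /hbern /bern invr1 mul1r. Qed.

Lemma hg_series1 m : hg_series 1 m = ((m.+1)`!%:R)^-1.
Proof. by rewrite /hg_series div1r. Qed.

Lemma hg_series_shift e m :
  exists K, hg_series e.+1 m = (((m.+1)`! + e * K)%N%:R)^-1.
Proof.
have [K def_f] := fact_shift e m; exists K.
by rewrite /hg_series def_f natrM invfM mulrA divff ?mul1r // natr_neq0 // fact_gt0.
Qed.

Section PIntegral.
Variable p : nat.
Hypothesis p_pr : prime p.

Definition p_integral (r : rat) :=
  exists (u : int) (v : nat), ~~ (p %| v)%N /\ r = u%:~R / v%:R.
Local Notation pint := p_integral.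

Lemma p_integral_int (u : int) : pint u%:~R.
Proof.
exists u, 1%N; split; last by rewrite divr1.
by rewrite dvdn1; case: (p =P 1%N) p_pr => // ->.
Qed.

Lemma p_integral_nat k : pint k%:R.
Proof. by have := p_integral_int k; rewrite pmulrn. Qed.

Lemma p_integralM x y : pint x -> pint y -> pint (x * y).
Proof.
move=> [u1 [v1 [p_v1 ->]]] [u2 [v2 [p_v2 ->]]].
exists (u1 * u2), (v1 * v2)%N; split; first by rewrite Euclid_dvdM // negb_or p_v1 p_v2.
have [v1_gt0 v2_gt0] : (0 < v1)%N /\ (0 < v2)%N.
  by case: v1 v2 p_v1 p_v2 => [|?] [|?]; rewrite ?dvdn0.
by rewrite intrM natrM; field; rewrite !natr_neq0.
Qed.

Lemma p_integralD x y : pint x -> pint y -> pint (x + y).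
Proof.
move=> [u1 [v1 [p_v1 ->]]] [u2 [v2 [p_v2 ->]]].
exists (u1 * v2%:Z + u2 * v1%:Z), (v1 * v2)%N.
split; first by rewrite Euclid_dvdM // negb_or p_v1 p_v2.
have [v1_gt0 v2_gt0] : (0 < v1)%N /\ (0 < v2)%N.
  by case: v1 v2 p_v1 p_v2 => [|?] [|?]; rewrite ?dvdn0.
by rewrite intrD !intrM natrM -!pmulrn; field; rewrite !natr_neq0.
Qed.

Lemma p_integralN x : pint x -> pint (- x).
Proof. by move=> [u [v [p_v ->]]]; exists (- u), v; rewrite intrN mulNr. Qed.

Lemma p_integralB x y : pint x -> pint y -> pint (x - y).
Proof. by move=> px py; apply/p_integralD/p_integralN. Qed.

Lemma p_integral_sum k (F : 'I_k -> rat) :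
  (forall i, pint (F i)) -> pint (\sum_(i < k) F i).
Proof.
move=> pF; elim/big_ind: _ => //; last exact: p_integralD.
by have := p_integral_nat 0; rewrite mulr0n.
Qed.

Lemma p_integral_divn a b :
  (0 < b)%N -> (logn p b <= logn p a)%N -> pint (a%:R / b%:R).
Proof.
move=> b_gt0 le_ab; case: (posnP a) => [->|a_gt0].
  by rewrite mul0r; exact: (p_integral_nat 0).
have [a' p'a' def_a] := pfactor_coprime p_pr a_gt0.
have [b' p'b' def_b] := pfactor_coprime p_pr b_gt0.
have b'_gt0 : (0 < b')%N by move: b_gt0; rewrite def_b muln_gt0 => /andP[].
set la := logn p a in le_ab def_a *; set lb := logn p b in le_ab def_b *.
exists (a' * p ^ (la - lb))%N, b'; split; first by rewrite -prime_coprime.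
have split_pa : (p ^ la = p ^ (la - lb) * p ^ lb)%N by rewrite -expnD subnK.
rewrite pmulrn {1}def_a {1}def_b split_pa !natrM.
by field; rewrite !natr_neq0 // expn_gt0 prime_gt0.
Qed.

Lemma p_integral_div_prod_fact e n nu : (0 < n)%N ->
  (nu + 1 + logn p (prod_fact n) + logn p n <= logn p e)%N ->
  pint (e%:R / (prod_fact n * n * p ^ nu.+1)%N%:R).
Proof.
move=> n_gt0 ord_e; have p_gt0 := prime_gt0 p_pr.
apply: p_integral_divn; first by rewrite !muln_gt0 prod_fact_gt0 n_gt0 expn_gt0 p_gt0.
by rewrite !lognM ?muln_gt0 ?prod_fact_gt0 ?expn_gt0 ?p_gt0 // pfactorK //; lia.
Qed.

Lemma p_integral_dvdn a b : (0 < b)%N -> (b %| a)%N -> pint (a%:R / b%:R).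
Proof.
move=> b_gt0 /dvdnP [c ->]; rewrite natrM mulfK ?natr_neq0 //.
exact: p_integral_nat.
Qed.

Lemma p_integral_div_addr x e K :
  (0 < x)%N -> (p ^ (logn p x).+1 %| e)%N -> pint (x%:R / (x + e * K)%:R).
Proof.
move=> x_gt0 pe; have xeK_gt0 : (0 < x + e * K)%N by rewrite ltn_addr.
apply: p_integral_divn => //; rewrite leqNgt -pfactor_dvdn //.
by rewrite dvdn_addl ?dvdn_mulr // pfactor_dvdn // ltnn.
Qed.

Lemma p_integral_fact_div_succ n :
  ~~ (p.-1 %| n)%N -> (0 < n)%N -> pint (n`!%:R / n.+1%:R).
Proof.
move=> p1'n n_gt0; apply: p_integral_divn => //.
have p_neq2 : p != 2%N by apply: contraNneq p1'n => ->; rewrite dvd1n.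
have [pr_n1 | npr_n1] := boolP (prime n.+1).
  by rewrite logn_prime // eq_sym; case: eqP p1'n => // <-; rewrite dvdnn.
have [n1_eq4 | n1_neq4] := eqVneq n.+1 4%N.
  by rewrite n1_eq4 -[4%N]/(2 * 2)%N lognM // logn_prime // (negbTE p_neq2).
by apply: dvdn_leq_log; [exact: fact_gt0 | exact: dvdn_fact_pred].
Qed.

Lemma ordq_divn (r : rat) (u : int) (v : nat) :
  u != 0 -> (0 < v)%N -> r = u%:~R / v%:R ->
  ordq p r = (logn p `|u|%N)%:Z - (logn p v)%:Z.
Proof.
move=> u_neq0 v_gt0 def_r.
have cross : numq r * v%:Z = u * denq r.
  apply: (@intr_inj rat); move: def_r; rewrite -[r in r = _]divq_num_den => /eqP.
  rewrite eqr_div ?intr_eq0 ?denq_neq0 ?natr_neq0 // => /eqP e.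
  by rewrite !intrM -pmulrn e.
have num_neq0 : numq r != 0.
  apply: contra_neq u_neq0 => num0; move: cross; rewrite num0 mul0r => /esym/eqP.
  by rewrite mulf_eq0 (negbTE (denq_neq0 r)) orbF => /eqP.
have := congr1 (fun z : int => logn p `|z|%N) cross => /=.
rewrite !abszM !lognM ?absz_gt0 ?denq_neq0 // /ordq /=; lia.
Qed.

Lemma ordq_pexpM s w : pint w -> w != 0 -> (s%:Z <= ordq p (p%:R ^+ s * w))%R.
Proof.
move=> [u [v [p'v def_w]]] w_neq0.
have u_neq0 : u != 0 by apply: contraNneq w_neq0 => u0; rewrite def_w u0 mul0r.
have v_gt0 : (0 < v)%N by case: v p'v {def_w} => //; rewrite dvdn0.
have p_gt0 := prime_gt0 p_pr.
rewrite (@ordq_divn _ (p%:Z ^+ s * u) v) //; last 2 first.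
- by rewrite mulf_neq0 // expf_neq0 // eqz_nat -lt0n.
- by rewrite def_w intrM mulrA rmorphXn /= -pmulrn.
rewrite abszM abszX /= lognM ?expn_gt0 ?absz_gt0 ?p_gt0 // pfactorK //.
rewrite (@logn_coprime p v) ?prime_coprime //; lia.
Qed.

Lemma p_integral_recurrence (a c F W : nat -> rat) n :
  (forall k, F k = c k - \sum_(j < k) a (k - j)%N * F j) ->
  (forall k, (k <= n)%N -> W k != 0) ->
  (forall j k, (j < k <= n)%N -> pint (W k * a (k - j)%N / W j)) ->
  (forall k, (k <= n)%N -> pint (W k * c k)) ->
  forall k, (k <= n)%N -> pint (W k * F k).
Proof.
move=> def_F W_neq0 pint_a pint_c; elim/ltn_ind => k IHk le_kn.
rewrite def_F mulrBr mulr_sumr; apply: p_integralB; first exact: pint_c.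
apply: p_integral_sum => j; have lt_jk := ltn_ord j.
have le_jn : (j <= n)%N := ltnW (leq_trans lt_jk le_kn).
have -> : W k * (a (k - j)%N * F j) = W k * a (k - j)%N / W j * (W j * F j).
  by field; apply: W_neq0.
by apply: p_integralM; [apply: pint_a; rewrite lt_jk | apply: IHk].
Qed.

Lemma p_integral_prod_fact_recip (a : nat -> rat) n : a 0%N = 1 ->
  (forall m, (0 < m <= n)%N -> pint ((m.+1)`!%:R * a m)) ->
  forall k, (k <= n)%N -> pint ((prod_fact k)%:R * recip_coef a k).
Proof.
move=> a0 pint_a.
apply: (@p_integral_recurrence a (fun k => (k == 0)%:R) _
          (fun k => (prod_fact k)%:R)) => [k|k _|j k|k _].
- exact: recip_coefE.
- by rewrite natr_neq0 ?prod_fact_gt0.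
- case/andP=> lt_jk le_kn.
  have -> : (prod_fact k)%:R * a (k - j)%N / (prod_fact j)%:R =
      (prod_fact k)%:R / ((k - j).+1`! * prod_fact j)%N%:R * ((k - j).+1`!%:R * a (k - j)%N).
    by rewrite natrM; field; rewrite !natr_neq0 ?prod_fact_gt0 ?fact_gt0.
  apply: p_integralM => //; last by apply: pint_a; rewrite subn_gt0 lt_jk /=; lia.
  by apply: p_integral_dvdn; rewrite ?muln_gt0 ?fact_gt0 ?prod_fact_gt0 ?dvdn_prod_fact.
- by rewrite -natrM; apply: p_integral_nat.
Qed.

Lemma p_integral_fact_hg e n m :
  (p ^ (logn p (prod_fact n)).+1 %| e)%N -> (m <= n)%N ->
  pint ((m.+1)`!%:R * hg_series e.+1 m).
Proof.
move=> p_e le_mn; have [K ->] := hg_series_shift e m.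
apply: p_integral_div_addr => //; first exact: fact_gt0.
apply: dvdn_trans p_e; rewrite dvdn_exp2l // ltnS dvdn_leq_log ?prod_fact_gt0 //.
exact: dvdn_fact_prod_fact.
Qed.

Lemma p_integral_fact_hg_sub e n m :
  (p ^ (logn p (prod_fact n)).+1 %| e)%N -> (m <= n)%N ->
  pint ((m.+1)`!%:R ^+ 2 * (hg_series 1 m - hg_series e.+1 m) / e%:R).
Proof.
move=> p_e le_mn; have [->|e_gt0] := posnP e.
  by rewrite invr0 mulr0; exact: (p_integral_nat 0).
have [K def_hg] := hg_series_shift e m.
have x_gt0 := fact_gt0 m.+1; set x := (m.+1)`! in x_gt0 def_hg *.
have -> : x%:R ^+ 2 * (hg_series 1 m - hg_series e.+1 m) / e%:R =
    K%:R * (x%:R / (x + e * K)%N%:R).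
  rewrite hg_series1 def_hg natrD natrM.
  field; rewrite -natrM -natrD !natr_neq0 //; exact: ltn_addr.
apply: p_integralM; first exact: p_integral_nat.
apply: p_integral_div_addr => //; apply: dvdn_trans p_e.
rewrite dvdn_exp2l // ltnS dvdn_leq_log ?prod_fact_gt0 //.
exact: dvdn_fact_prod_fact.
Qed.

Lemma p_integral_weight_ratio n j k :
  (0 < n)%N -> ~~ (p.-1 %| n)%N -> (j < k <= n)%N ->
  pint ((prod_fact k * (minn k.+1 n)`!)%N%:R / ((k - j).+1`! ^ 2 * prod_fact j)%N%:R).
Proof.
move=> n_gt0 p1'n /andP [lt_jk le_kn].
have den_gt0 : (0 < (k - j).+1`! ^ 2 * prod_fact j)%N.
  by rewrite muln_gt0 expn_gt0 fact_gt0 prod_fact_gt0.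
have [/andP [/eqP -> /eqP ->]|not_extreme] := boolP ((j == 0%N) && (k == n)).
  have [n' def_n] : exists n', n = n'.+1 by exists n.-1; rewrite prednK.
  have prod_fact0 : prod_fact 0 = 1%N by rewrite /prod_fact big_ord1.
  subst n; rewrite subn0 prod_factS prod_fact0 (minn_idPr (leqnSn _)).
  have -> : (prod_fact n' * n'.+2`! * n'.+1`!)%N%:R / (n'.+2`! ^ 2 * 1)%N%:R =
      (prod_fact n')%:R / n'.+1`!%:R * (n'.+1`!%:R / n'.+2%:R) :> rat.
    have [P_gt0 f_gt0] := (prod_fact_gt0 n', fact_gt0 n'.+1).
    rewrite [n'.+2`!]factS.
    move: (prod_fact n') (n'.+1`!) (n'.+2) P_gt0 f_gt0 (ltn0Sn n'.+1).
    by move=> P f x P_gt0 f_gt0 x_gt0; rewrite !natrM; field; rewrite !natr_neq0.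
  apply: p_integralM; first by apply: p_integral_dvdn; rewrite ?fact_gt0 ?dvdn_fact_prod_fact.
  exact: p_integral_fact_div_succ.
apply: p_integral_dvdn => //; rewrite expnS expn1 mulnAC.
apply: dvdn_mul; first exact: dvdn_prod_fact.
apply: dvdn_fact_fact; rewrite leq_min; apply/andP; split; first by rewrite ltnS leq_subr.
by move: not_extreme; rewrite negb_and; lia.
Qed.

Section HypergeometricDifference.
Variables e n : nat.
Hypotheses (n_gt0 : (0 < n)%N) (p1'n : ~~ (p.-1 %| n)%N)
  (e_gt0 : (0 < e)%N) (p_e : (p ^ (logn p (prod_fact n)).+1 %| e)%N).
(* Capping the factorial at n! for k = n is the sharpening that needs p - 1 not dividing n. *)
Local Notation weight k := ((prod_fact k * (minn k.+1 n)`!)%N%:R / e%:R : rat).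

Lemma p_integral_hg_recip_sub k : (k <= n)%N ->
  pint (weight k * (recip_coef (hg_series e.+1) k - recip_coef (hg_series 1) k)).
Proof.
have weight_neq0 j : weight j != 0.
  by apply: mulf_neq0; rewrite ?invr_eq0 natr_neq0 // muln_gt0 prod_fact_gt0 fact_gt0.
apply: (@p_integral_recurrence (hg_series e.+1)
  (fun k => \sum_(j < k) (hg_series 1 (k - j) - hg_series e.+1 (k - j))
                         * recip_coef (hg_series 1) j)
  (fun k => recip_coef (hg_series e.+1) k - recip_coef (hg_series 1) k)
  (fun k => weight k)) => [{}k|{}k _|j {}k|{}k le_kn].
- exact: recip_coefB (hg_series0 _) (hg_series0 _).
- exact: weight_neq0.
- case/andP=> lt_jk le_kn; rewrite (minn_idPl (leq_trans lt_jk le_kn)).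
  have -> : weight k * hg_series e.+1 (k - j) / ((prod_fact j * j.+1`!)%N%:R / e%:R) =
      (prod_fact k * (minn k.+1 n)`!)%N%:R / ((k - j).+1`! * prod_fact j * j.+1`!)%N%:R
      * ((k - j).+1`!%:R * hg_series e.+1 (k - j)).
    have [[P_gt0 f_gt0] g_gt0] := (prod_fact_gt0 j, fact_gt0 (k - j).+1, fact_gt0 j.+1).
    move: (prod_fact k * (minn k.+1 n)`!)%N (prod_fact j) ((k - j).+1`!) (j.+1`!)
      P_gt0 f_gt0 g_gt0.
    by move=> A P f g P_gt0 f_gt0 g_gt0; rewrite !natrM; field; rewrite !natr_neq0.
  apply: p_integralM; first by apply: p_integral_dvdn; rewrite ?dvdn_weight ?lt_jk //
    !muln_gt0 !fact_gt0 prod_fact_gt0.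
  by apply: (@p_integral_fact_hg e n _ p_e); lia.
- rewrite mulr_sumr; apply: p_integral_sum => j; have lt_jk := ltn_ord j.
  have -> : weight k * ((hg_series 1 (k - j) - hg_series e.+1 (k - j))
                        * recip_coef (hg_series 1) j) =
      (prod_fact k * (minn k.+1 n)`!)%N%:R / ((k - j).+1`! ^ 2 * prod_fact j)%N%:R
      * ((k - j).+1`!%:R ^+ 2 * (hg_series 1 (k - j) - hg_series e.+1 (k - j)) / e%:R)
      * ((prod_fact j)%:R * recip_coef (hg_series 1) j).
    have [P_gt0 f_gt0] := (prod_fact_gt0 j, fact_gt0 (k - j).+1).
    move: (prod_fact k * (minn k.+1 n)`!)%N (prod_fact j) ((k - j).+1`!) P_gt0 f_gt0.
    by move=> A P f P_gt0 f_gt0; rewrite !natrM; field; rewrite !natr_neq0.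
  apply: p_integralM; first apply: p_integralM.
  + by apply: p_integral_weight_ratio => //; rewrite lt_jk.
  + by apply: (@p_integral_fact_hg_sub e n _ p_e); lia.
  + apply: (@p_integral_prod_fact_recip _ n (hg_series0 1)) => [m /andP [_ le_mn]|].
      exact: (@p_integral_fact_hg 0 n m (dvdn0 _) le_mn).
    by rewrite ltnW // (leq_trans lt_jk le_kn).
Qed.

End HypergeometricDifference.

End PIntegral.

Theorem corollary1 (p N n nu : nat) :
  prime p -> (1 <= N)%N -> (1 <= n)%N -> ~~ (p.-1 %| n)%N ->
  (* ord_p(N-1) >= nu+1+ord_p(prod_{k=0}^n (1+k)!) + ord_p(n), where
     ord_p(0) = +oo, i.e. the hypothesis is automatic when N = 1 *)
  (N = 1%N \/
   (nu + 1 + logn p (\prod_(k < n.+1) (1 + k)`!) + logn p n <= logn p (N - 1))%N) ->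
  congr_ppow p nu.+1 (hbern N n / n%:R) (bern n / n%:R).
Proof.
move=> p_pr N_gt0 n_gt0 p1'n [-> | ord_N]; first by left; rewrite bernE.
have [e def_N] : exists e, N = e.+1 by exists N.-1; rewrite prednK.
rewrite def_N subn1 /= -/(prod_fact n) in ord_N *.
have e_gt0 : (0 < e)%N by case: e {def_N} ord_N; rewrite ?logn0; lia.
have p_e : (p ^ (logn p (prod_fact n)).+1 %| e)%N by rewrite pfactor_dvdn //; lia.
have pint_w := p_integral_hg_recip_sub p_pr n_gt0 p1'n e_gt0 p_e (leqnn n).
rewrite (minn_idPr (leqnSn n)) in pint_w; set w := (X in p_integral p X) in pint_w.
have pint_r := p_integral_div_prod_fact p_pr n_gt0 ord_N.
set r := (X in p_integral p X) in pint_r.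
have def_diff : hbern e.+1 n / n%:R - bern n / n%:R = p%:R ^+ nu.+1 * (w * r).
  rewrite /w /r bernE !hbernE !natrM natrX; field.
  by rewrite expf_neq0 !natr_neq0 ?prod_fact_gt0 ?(prime_gt0 p_pr).
have [wr_eq0 | wr_neq0] := eqVneq (w * r) 0.
  by left; apply/eqP; rewrite -subr_eq0 def_diff wr_eq0 mulr0.
by right; rewrite def_diff; apply: ordq_pexpM => //; apply: p_integralM.
Qed.
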